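(* Let $M$ be a magma satisfying $xy = xz$ and $(xy)z = xy$ for all $x,y,z\in M$. Then $M$ satisfies $xy = x$ for all $x,y\in M$ if and only if $M$ avoids the $2$-element null semigroup $2_N$ on $\{0,1\}$ with Cayley table \[ \begin{array}{c|cc} 2_{N} & 0 & 1 \\ \hline 0 & 0 & 0 \\ 1 & 0 & 0 \end{array}. \]
   Context: A magma is a nonempty set with a binary operation, written by juxtaposition. A magma $M$ avoids a magma $F$ if no submagma of $M$ is isomorphic to $F$. *)

Definition is_submagma {M : Type} (op : M -> M -> M) (S : M -> Prop) : Prop :=
  (exists x, S x) /\ (forall x y, S x -> S y -> S (op x y)).

Definition submagma_iso {M F : Type} (op : M -> M -> M) (opF : F -> F -> F)
  (S : M -> Prop) : Prop :=
  exists f : F -> M,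
    (forall a, S (f a)) /\
    (forall a b, f a = f b -> a = b) /\
    (forall x, S x -> exists a, f a = x) /\
    (forall a b, f (opF a b) = op (f a) (f b)).

Definition avoids {M F : Type} (op : M -> M -> M) (opF : F -> F -> F) : Prop :=
  ~ (exists S : M -> Prop, is_submagma op S /\ submagma_iso op opF S).

(* The 2-element null semigroup 2_N on {0,1} (encoded as bool, 0 = false):
   every product is 0. *)
Definition null2 (a b : bool) : bool := false.

From Stdlib Require Import Classical.

(* If xy = x throughout M then every submagma satisfies that identity, which 2_N
   violates (1 * 1 = 0).  Conversely, if xy <> x for some x, y, the identities
   xw = xy and (xy)w = xy make the pair {x, xy} a copy of 2_N. *)

Section NullSubmagma.

Variables (M : Type) (op : M -> M -> M).

Lemma left_zero_avoids (F : Type) (opF : F -> F -> F) (a b : F) :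
  (forall x y : M, op x y = x) -> opF a b <> a -> avoids op opF.
Proof.
  intros Hlz Hab [S [_ [f [_ [f_inj [_ f_hom]]]]]].
  apply Hab, f_inj.
  rewrite f_hom; apply Hlz.
Qed.

Lemma pair_null2_not_avoids (x a : M) :
  a <> x -> (forall w, op x w = a) -> (forall w, op a w = a) ->
  ~ avoids op null2.
Proof.
  intros Hax Hx Ha Hav; apply Hav.
  exists (fun z => z = a \/ z = x).
  split.
  - split; [exists a; auto |].
    intros u v [-> | ->] _; left; auto.
  - exists (fun b : bool => if b then x else a).
    split; [| split; [| split]].
    + intros [|]; auto.
    + intros [|] [|] E; auto; exfalso; apply Hax; auto.
    + intros z [-> | ->]; [exists false | exists true]; auto.
    + intros [|] b; simpl; auto.
Qed.

End NullSubmagma.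

Theorem mainTheorem7 (M : Type) (op : M -> M -> M) (m0 : M)
  (h1 : forall x y z : M, op x y = op x z)
  (h2 : forall x y z : M, op (op x y) z = op x y) :
  (forall x y : M, op x y = x) <-> avoids op null2.
Proof.
  split.
  - intros Hlz.
    apply (left_zero_avoids M op bool null2 true true Hlz); discriminate.
  - intros Hav x y.
    apply NNPP; intros Hxy.
    apply (pair_null2_not_avoids M op x (op x y)); auto.
Qed.
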